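(* Let $N\ge3$ be an integer and $s\in\mathbb{R}$. Define $H=H_{int}^N(s)=(h_1,\dots,h_N)$ by $h_1=s$, $h_{n+2}=(s^2-1)s^n$ for $n=0,1,\dots,N-3$, and $h_N=-s^{N-2}$ (with $s^0=1$). Then the aperiodic auto-correlation $A_d=\sum_i h_ih_{i+d}$ (with $h_k=0$ for $k\notin\{1,\dots,N\}$) satisfies $A_0=1+s^{2N-2}$, $A_{N-1}=A_{-(N-1)}=-s^{N-1}$, and $A_d=0$ for all $0<|d|<N-1$. In particular, for integer $s$ the array is integer-valued. *)

From mathcomp Require Import all_boot all_order all_algebra.
From mathcomp Require Import reals.
Set Implicit Arguments. Unset Strict Implicit. Unset Printing Implicit Defensive.
Import Order.TTheory GRing.Theory Num.Theory.
Local Open Scope ring_scope.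

Definition Hint {R : ringType} (N : nat) (s : R) (k : int) : R :=
  match k with
  | Posz n =>
      if n == 1%N then s
      else if n == N then - s ^+ (N - 2)
      else if (2 <= n <= N - 1)%N then (s ^+ 2 - 1) * s ^+ (n - 2)
      else 0
  | Negz _ => 0
  end.

(* Aperiodic auto-correlation A_d = sum_i h_i h_{i+d}; since h vanishes
   outside {1..N} it suffices to sum over i = 1..N. *)
Definition acorr {R : ringType} (h : int -> R) (N : nat) (d : int) : R :=
  \sum_(i < N) h (Posz i.+1) * h (Posz i.+1 + d).

From mathcomp Require Import all_boot all_order all_algebra.
From mathcomp Require Import reals.
From mathcomp Require Import ring zify.
Set Implicit Arguments. Unset Strict Implicit. Unset Printing Implicit Defensive.
Import Order.TTheory GRing.Theory Num.Theory.
Local Open Scope ring_scope.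

(* The proof has two independent parts.
   1. Facts about the aperiodic autocorrelation A_d = sum_i h_i h_(i+d) of an
      arbitrary array h supported on {1..N} over a commutative ring: for
      0 <= m <= N only the indices i < N - m contribute to A_m, the
      autocorrelation is symmetric (A_(-m) = A_m), and when m + 2 <= N the
      sum splits as h_1 h_(1+m) + (middle terms) + h_(N-m) h_N.
   2. For h = H_int^N(s) the middle terms are products of two entries
      (s^2-1) s^a, so they form a geometric sum, which telescopes to
      (s^2-1) s^m (s^(2k) - 1) with k = N - m - 2.  Adding the two boundary
      products then gives 1 + s^(2N-2) for m = 0 and 0 for 0 < m < N - 1,
      while A_(N-1) = h_1 h_N = -s^(N-1) directly. *)

Section SupportedAutocorrelation.
Variables (R : comNzRingType) (N : nat) (h : int -> R).

Hypothesis h_out : forall k : int, (k <= 0) || (N%:Z < k) -> h k = 0.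

(* For a nonnegative shift m, the terms with i + 1 + m > N vanish. *)
Lemma acorr_pos (m : nat) : (m <= N)%N ->
  acorr h N m = \sum_(0 <= i < N - m) h i.+1%:Z * h (i.+1 + m)%:Z.
Proof.
move=> le_mN; rewrite /acorr.
rewrite -(big_mkord xpredT (fun i => h i.+1%:Z * h (i.+1%:Z + m%:Z))).
rewrite (big_cat_nat (n := N - m)) ?leq_subr //= [X in _ + X]big1_seq ?addr0.
  by apply: eq_bigr => i _; rewrite PoszD.
move=> i; rewrite mem_index_iota => /andP[_ /andP[lo _]].
rewrite -PoszD (@h_out (i.+1 + m)%N) ?mulr0 //.
by apply/orP; right; rewrite ltz_nat; lia.
Qed.

Lemma acorr_opp (m : nat) : (m <= N)%N -> acorr h N (- m%:Z) = acorr h N m.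
Proof.
move=> le_mN; rewrite acorr_pos // /acorr.
rewrite -(big_mkord xpredT (fun i => h i.+1%:Z * h (i.+1%:Z - m%:Z))).
rewrite (big_cat_nat (n := m)) //= big1_seq ?add0r; last first.
  move=> i; rewrite mem_index_iota => /andP[_ /andP[_ lt_im]].
  by rewrite (@h_out (i.+1%:Z - m%:Z)) ?mulr0 // subr_le0 lez_nat lt_im.
rewrite (big_addn 0 N m); apply: eq_bigr => i _.
by rewrite -addSn PoszD addrK mulrC.
Qed.

Lemma acorr_ends (m : nat) : (m + 2 <= N)%N ->
  acorr h N m = h 1 * h (1 + m)%:Z
    + \sum_(0 <= i < N - m - 2) h i.+2%:Z * h (i.+2 + m)%:Z
    + h (N - m)%:Z * h N.
Proof.
move=> le_m2N; rewrite acorr_pos; last lia.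
have eNm : (N - m = (N - m - 2).+2)%N by lia.
rewrite {1}eNm big_nat_recr // big_nat_recl //= -eNm subnK //; lia.
Qed.

End SupportedAutocorrelation.

Section HintAutocorrelation.
Variables (R : comNzRingType) (N : nat) (s : R).
Hypothesis N_ge3 : (3 <= N)%N.

Local Notation h := (Hint N s).

Lemma Hint_out (k : int) : (k <= 0) || (N%:Z < k) -> h k = 0.
Proof.
case: k => [n|n] //=; rewrite lez_nat ltz_nat => out_n.
have -> : (n == 1%N) = false by apply/eqP; lia.
have -> : (n == N) = false by apply/eqP; lia.
by have -> : (2 <= n <= N - 1)%N = false by apply/negbTE; lia.
Qed.

Lemma Hint_first : h 1 = s.
Proof. by []. Qed.

Lemma Hint_last : h N = - s ^+ (N - 2).
Proof. by rewrite /Hint eqxx; case: eqP => // N1; move: N_ge3; rewrite N1. Qed.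

Lemma Hint_mid (n : nat) : (2 <= n <= N - 1)%N ->
  h n = (s ^+ 2 - 1) * s ^+ (n - 2).
Proof.
move=> mid_n; rewrite /Hint mid_n.
have -> : (n == 1%N) = false by apply/eqP; lia.
by have -> : (n == N) = false by apply/eqP; lia.
Qed.

(* The middle terms of A_m form a geometric sum in s^2, which telescopes. *)
Lemma Hint_middle_sum (k m : nat) : (k + m + 2 <= N)%N ->
  \sum_(0 <= i < k) h i.+2%:Z * h (i.+2 + m)%:Z
    = (s ^+ 2 - 1) * s ^+ m * (s ^+ (2 * k) - 1).
Proof.
elim: k => [|k IHk] bound; first by rewrite big_geq // muln0 subrr mulr0.
rewrite big_nat_recr // IHk; last lia.
rewrite !Hint_mid; [|lia|lia].
have -> : (k.+2 - 2 = k)%N by lia.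
have -> : (k.+2 + m - 2 = k + m)%N by lia.
rewrite mulnS !exprD /=; ring.
Qed.

(* Zero shift: s^2 + (s^2-1)(s^(2N-4)-1) + s^(2N-4) = 1 + s^(2N-2). *)
Lemma acorr_Hint0 : acorr h N 0 = 1 + s ^+ (2 * N - 2).
Proof.
rewrite (acorr_ends Hint_out (m := 0%N)); last lia.
rewrite subn0 !addn0 Hint_middle_sum; last lia.
rewrite Hint_first Hint_last.
have -> : (2 * N - 2 = 2 * (N - 2) + 2)%N by lia.
rewrite exprD mulnC exprM; ring.
Qed.

(* Extreme shift: only the product h_1 h_N survives. *)
Lemma acorr_Hint_edge : acorr h N (N - 1)%N = - s ^+ (N - 1).
Proof.
rewrite (acorr_pos Hint_out) ?leq_subr //.
have -> : (N - (N - 1) = 1)%N by lia.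
rewrite big_nat1; have -> : (0.+1 + (N - 1) = N)%N by lia.
rewrite Hint_first Hint_last mulrN -exprS; congr (- s ^+ _); lia.
Qed.

(* Intermediate shifts m = p + 1: with k = N - m - 2, the boundary terms
   (s^2-1) s^(p+1) and -(s^2-1) s^(2k+p+1) cancel the geometric sum. *)
Lemma acorr_Hint_mid (m : nat) : (0 < m < N - 1)%N -> acorr h N m = 0.
Proof.
case: m => [|p] // mid_p; rewrite (acorr_ends Hint_out); last lia.
rewrite Hint_middle_sum; last lia.
rewrite Hint_first Hint_last !Hint_mid; [|lia|lia].
set k := (N - p.+1 - 2)%N.
have -> : (1 + p.+1 - 2 = p)%N by lia.
have -> : (N - 2 = k + p.+1)%N by lia.
rewrite !exprD !exprS; ring.
Qed.

End HintAutocorrelation.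

(* Every entry of H_int^N(s) is an integer polynomial in s, hence lies in any
   subring containing s. *)
Lemma Hint_subring (R : nzRingType) (S : subringClosed R) (N : nat) (s : R)
    (k : int) : s \in S -> Hint N s k \in S.
Proof.
move=> sS; case: k => [n|n] /=; last exact: rpred0.
case: ifP => _ //; case: ifP => _; first by rewrite rpredN rpredX.
case: ifP => _; last exact: rpred0.
by rewrite rpredM ?rpredB ?rpred1 ?rpredX.
Qed.

Theorem mainTheorem8 (R : realType) (N : nat) (s : R) (hN : (3 <= N)%N) :
  acorr (Hint N s) N 0 = 1 + s ^+ (2 * N - 2)
  /\ acorr (Hint N s) N (Posz (N - 1)) = - s ^+ (N - 1)
  /\ acorr (Hint N s) N (- Posz (N - 1)) = - s ^+ (N - 1)
  /\ (forall d : int, 0 < `|d| < Posz (N - 1) -> acorr (Hint N s) N d = 0)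
  /\ (s \is a Num.int -> forall k : int, Hint N s k \is a Num.int).
Proof.
split; first exact: acorr_Hint0.
split; first exact: acorr_Hint_edge.
split; first by rewrite (acorr_opp (Hint_out s hN)) ?leq_subr // acorr_Hint_edge.
split; last by move=> s_int k; exact: Hint_subring.
case=> [m|m]; rewrite ?NegzE !ltz_nat /= => mid_m; first exact: acorr_Hint_mid.
by rewrite (acorr_opp (Hint_out s hN)) ?acorr_Hint_mid //; lia.
Qed.
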